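(* Let $n$ be even, $w\le n$, ${\mathbf{a}},{\mathbf{b}},{\mathbf{c}},{\mathbf{d}}\in\mathbb{F}_3^{n/2}$ with $a_id_i-b_ic_i=1$, $a_ic_i\neq0$ for all $i$, and $\varphi({\mathbf{x}},{\mathbf{y}})=({\mathbf{a}}\odot{\mathbf{x}}+{\mathbf{b}}\odot{\mathbf{y}},{\mathbf{c}}\odot{\mathbf{x}}+{\mathbf{d}}\odot{\mathbf{y}})$. Let $({\mathbf{e}}_U,{\mathbf{e}}_V)$ be a random pair in $\mathbb{F}_3^{n/2}\times\mathbb{F}_3^{n/2}$ (the output of a randomized decoding procedure with uniformly random syndromes) such that ${\mathbf{e}}=\varphi({\mathbf{e}}_U,{\mathbf{e}}_V)$ always has weight $w$, such that $\mathbb{P}({\mathbf{e}}_V={\mathbf{x}})$ depends only on $|{\mathbf{x}}|$ (''weightwise uniform''), and such that $\mathbb{P}({\mathbf{e}}_U={\mathbf{x}}_U\mid{\mathbf{e}}_V={\mathbf{x}}_V)$ depends only on the pair $(|{\mathbf{x}}_V|,m_1(\varphi({\mathbf{x}}_U,{\mathbf{x}}_V)))$ (''$m_1$-uniform''). Let $\widetilde{{\mathbf{e}}}$ be uniformly distributed over the vectors of $\mathbb{F}_3^n$ of weight $w$, and $(\widetilde{{\mathbf{e}}}_U,\widetilde{{\mathbf{e}}}_V)=\varphi^{-1}(\widetilde{{\mathbf{e}}})$. If $|{\mathbf{e}}_V|$ and $|\widetilde{{\mathbf{e}}}_V|$ have the same distribution and, for all possible $y,z$, $$\mathbb{P}(m_1({\mathbf{e}})=z\mid|{\mathbf{e}}_V|=y)=\mathbb{P}(m_1(\widetilde{{\mathbf{e}}})=z\mid|\widetilde{{\mathbf{e}}}_V|=y),$$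 then ${\mathbf{e}}$ and $\widetilde{{\mathbf{e}}}$ have the same distribution.
   Context: $|{\mathbf{x}}|$ is the Hamming weight. For ${\mathbf{x}}\in\mathbb{F}_3^n$, $m_1({\mathbf{x}})=|\{1\le i\le n/2: |(x_i,x_{i+n/2})|=1\}|$. $\varphi^{-1}({\mathbf{x}},{\mathbf{y}})=({\mathbf{d}}\odot{\mathbf{x}}-{\mathbf{b}}\odot{\mathbf{y}},-{\mathbf{c}}\odot{\mathbf{x}}+{\mathbf{a}}\odot{\mathbf{y}})$; vectors in $\mathbb{F}_3^n$ are identified with pairs of vectors in $\mathbb{F}_3^{n/2}$. *)

From HB Require Import structures.
From mathcomp Require Import all_boot all_order all_algebra.
Set Implicit Arguments. Unset Strict Implicit. Unset Printing Implicit Defensive.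
Import Order.TTheory GRing.Theory Num.Theory.
Local Open Scope ring_scope.

(* vectors of F_3^k; a vector of F_3^(2k) is identified with the pair (x,y)
   where x = first half and y = second half *)
Definition vec (k : nat) := 'rV['F_3]_k.
Definition pvec (k : nat) := (vec k * vec k)%type.

Definition wt k (x : vec k) : nat := #|[set i : 'I_k | x ord0 i != 0]|.
Definition pwt k (e : pvec k) : nat := (wt e.1 + wt e.2)%N.

Definition m1 k (e : pvec k) : nat :=
  #|[set i : 'I_k | addn (e.1 ord0 i != 0) (e.2 ord0 i != 0) == 1%N]|.

Definition hprod k (a x : vec k) : vec k := \row_i (a ord0 i * x ord0 i).

Definition phi k (a b c d : vec k) (e : pvec k) : pvec k :=
  (hprod a e.1 + hprod b e.2, hprod c e.1 + hprod d e.2).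
Definition phi_inv k (a b c d : vec k) (e : pvec k) : pvec k :=
  (hprod d e.1 - hprod b e.2, - hprod c e.1 + hprod a e.2).

Definition is_distr (R : numDomainType) (T : finType) (P : {ffun T -> R}) :=
  (forall t, 0 <= P t) /\ \sum_t P t = 1.

Definition prob (R : numDomainType) (T : finType) (P : {ffun T -> R})
  (A : pred T) : R := \sum_(t | A t) P t.

Definition cprob (R : numFieldType) (T : finType) (P : {ffun T -> R})
  (A B : pred T) : R := prob P [pred t | A t && B t] / prob P B.

Definition unif_wt (R : numFieldType) k (w : nat) : {ffun pvec k -> R} :=
  [ffun e => if pwt e == w then (#|[set e' : pvec k | pwt e' == w]|%:R)^-1 else 0].

Definition margV (R : numDomainType) k (P : {ffun pvec k -> R}) (x : vec k) : R :=
  prob P [pred p : pvec k | p.2 == x].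

Definition law_phi (R : numDomainType) k (a b c d : vec k) (P : {ffun pvec k -> R})
  (z : pvec k) : R := prob P [pred p | phi a b c d p == z].

(* Since phi is a bijection, P(e = x) = P((e_U, e_V) = p0) with
   p0 = phi^-1(x).  Among the pairs p with |p.2| = |p0.2| and
   m1(phi p) = m1(x), the two uniformity hypotheses make P constant, while the
   uniform law on weight-w vectors is constant on their images as soon as
   P p0 > 0 (every such image then has weight w).  The hypothesis on the
   conditional law of m1 says that both laws give this class the same mass,
   so the two constants agree. *)

From HB Require Import structures.
From mathcomp Require Import all_boot all_order all_algebra.
From mathcomp Require Import ring.

Set Implicit Arguments.
Unset Strict Implicit.
Unset Printing Implicit Defensive.
Import Order.TTheory GRing.Theory Num.Theory.
Local Open Scope ring_scope.

Lemma const_eq_of_eq_sums (R : numDomainType) (T : finType) (A : pred T)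
    (f g : T -> R) (t0 : T) :
  A t0 -> 0 <= f t0 -> (forall t, A t -> 0 <= g t) ->
  (forall t, A t -> f t = f t0) ->
  (0 < f t0 -> forall t, A t -> g t = g t0) ->
  \sum_(t | A t) f t = \sum_(t | A t) g t -> f t0 = g t0.
Proof.
move=> At0 f0_ge0 g_ge0 f_const g_const eq_sums.
have [f0_eq0 | f0_gt0] := eqVneq (f t0) 0.
  have sum_g0 : \sum_(t | A t) g t = 0.
    by rewrite -eq_sums big1 // => t /f_const ->.
  by rewrite f0_eq0 (psumr_eq0P g_ge0 sum_g0).
have {}f0_gt0 : 0 < f t0 by rewrite lt_def f0_gt0.
move: eq_sums; rewrite (eq_bigr _ f_const) (eq_bigr _ (g_const f0_gt0)).
have A_gt0 : (0 < #|A|)%N by apply/card_gt0P; exists t0.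
by rewrite !sumr_const => /eqP; rewrite eqrMn2r eqn0Ngt A_gt0 => /eqP.
Qed.

Lemma prob_eq_and_of_cprob (R : numFieldType) (T T' : finType)
    (P : {ffun T -> R}) (Q : {ffun T' -> R}) A B A' B' :
  prob P B = prob Q B' -> prob P B != 0 ->
  cprob P A B = cprob Q A' B' ->
  prob P [pred t | A t && B t] = prob Q [pred t | A' t && B' t].
Proof.
move=> eqB B_neq0; rewrite /cprob -eqB => /(congr1 (fun r => r * prob P B)).
by rewrite !divfK.
Qed.

Lemma unif_wt_ge0 (R : numFieldType) k w (e : pvec k) : 0 <= unif_wt R k w e.
Proof. by rewrite ffunE; case: ifP => // _; rewrite invr_ge0 ler0n. Qed.

Lemma unif_wt_eq (R : numFieldType) k w (e e' : pvec k) :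
  pwt e = w -> pwt e' = w -> unif_wt R k w e = unif_wt R k w e'.
Proof. by rewrite !ffunE => -> ->. Qed.

Section Phi.

Variables (k : nat) (a b c d : vec k).
Hypothesis det1 : forall i, a ord0 i * d ord0 i - b ord0 i * c ord0 i = 1.

Local Notation phi := (phi a b c d).
Local Notation phi_inv := (phi_inv a b c d).

Lemma phiK : cancel phi phi_inv.
Proof.
by case=> x y; congr pair; apply/rowP => i; rewrite !mxE -[RHS]mul1r -(det1 i); ring.
Qed.

Lemma phi_invK : cancel phi_inv phi.
Proof.
by case=> x y; congr pair; apply/rowP => i; rewrite !mxE -[RHS]mul1r -(det1 i); ring.
Qed.

Lemma law_phiE (R : numDomainType) (P : {ffun pvec k -> R}) e :
  law_phi a b c d P e = P (phi_inv e).
Proof.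
rewrite /law_phi /prob (big_pred1 (phi_inv e)) // => p /=.
by apply/eqP/eqP => [<- | ->]; rewrite ?phiK ?phi_invK.
Qed.

Lemma prob_phi (R : numDomainType) (Q : {ffun pvec k -> R}) (A : pred (pvec k)) :
  prob Q A = \sum_(p | A (phi p)) Q (phi p).
Proof.
by rewrite /prob (reindex phi) //; exists phi_inv => p _; rewrite ?phiK ?phi_invK.
Qed.

End Phi.

Section Uniformity.

Variables (R : realFieldType) (k : nat) (a b c d : vec k) (P : {ffun pvec k -> R}).
Hypothesis P_ge0 : forall p, 0 <= P p.
Hypothesis margV_wt : forall x x' : vec k, wt x = wt x' -> margV P x = margV P x'.
Hypothesis cond_m1 : forall xU xV xU' xV' : vec k,
  0 < margV P xV -> 0 < margV P xV' -> wt xV = wt xV' ->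
  m1 (phi a b c d (xU, xV)) = m1 (phi a b c d (xU', xV')) ->
  P (xU, xV) / margV P xV = P (xU', xV') / margV P xV'.

Lemma margV_gt0 y : 0 < prob P [pred p : pvec k | wt p.2 == y] ->
  forall x, wt x = y -> 0 < margV P x.
Proof.
rewrite lt_def psumr_neq0 // => /andP[/hasP[p _ /andP[/eqP wt_p P_gt0]] _] x wt_x.
rewrite (@margV_wt x p.2) ?wt_x ?wt_p //.
apply: lt_le_trans P_gt0 _; rewrite /margV /prob (bigD1 p) //=.
by rewrite lerDl sumr_ge0.
Qed.

Lemma P_eq_of_m1 p q :
  0 < prob P [pred r : pvec k | wt r.2 == wt p.2] -> wt p.2 = wt q.2 ->
  m1 (phi a b c d p) = m1 (phi a b c d q) -> P p = P q.
Proof.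
case: p q => [xU xV] [xU' xV'] /= mass_gt0 eq_wt eq_m1.
have margV_p := margV_gt0 mass_gt0 (erefl (wt xV)).
have margV_q := margV_gt0 mass_gt0 (esym eq_wt).
move: (cond_m1 margV_p margV_q eq_wt eq_m1); rewrite (margV_wt eq_wt).
by move/(congr1 (fun r => r * margV P xV')); rewrite !divfK ?gt_eqF.
Qed.

End Uniformity.

Theorem lemma1 (R : realFieldType) (k w : nat) (a b c d : vec k)
  (P : {ffun pvec k -> R}) :
  (w <= 2 * k)%N ->
  (forall i, a ord0 i * d ord0 i - b ord0 i * c ord0 i = 1) ->
  (forall i, a ord0 i * c ord0 i != 0) ->
  is_distr P ->
  (* e = phi(e_U, e_V) always has weight w *)
  (forall p, 0 < P p -> pwt (phi a b c d p) = w) ->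
  (* e_V is weightwise uniform *)
  (forall x x' : vec k, wt x = wt x' -> margV P x = margV P x') ->
  (* e_U given e_V is m1-uniform *)
  (forall xU xV xU' xV' : vec k, 0 < margV P xV -> 0 < margV P xV' ->
     wt xV = wt xV' ->
     m1 (phi a b c d (xU, xV)) = m1 (phi a b c d (xU', xV')) ->
     P (xU, xV) / margV P xV = P (xU', xV') / margV P xV') ->
  let Q := unif_wt R k w in
  (* |e_V| and |~e_V| have the same distribution *)
  (forall y : nat, prob P [pred p : pvec k | wt p.2 == y]
     = prob Q [pred e : pvec k | wt (phi_inv a b c d e).2 == y]) ->
  (* same conditional law of m1 given |e_V| *)
  (forall y z : nat, 0 < prob P [pred p : pvec k | wt p.2 == y] ->
     cprob P [pred p : pvec k | m1 (phi a b c d p) == z] [pred p : pvec k | wt p.2 == y]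
     = cprob Q [pred e : pvec k | m1 e == z]
               [pred e : pvec k | wt (phi_inv a b c d e).2 == y]) ->
  (* conclusion: e and ~e have the same distribution *)
  forall e : pvec k, law_phi a b c d P e = Q e.
Proof.
move=> _ det1 _ [P_ge0 _] wt_supp margV_wt cond_m1 Q eq_wtV eq_m1 e.
rewrite law_phiE //; set p0 := phi_inv a b c d e.
have phi_p0 : phi a b c d p0 = e by apply: phi_invK.
set y := wt p0.2; set mass := prob P [pred p : pvec k | wt p.2 == y].
have [mass0 | mass_gt0] := eqVneq mass 0.
  rewrite (psumr_eq0P _ mass0) ?inE //=; move: mass0; rewrite /mass eq_wtV.
  by move/psumr_eq0P => -> //= *; apply: unif_wt_ge0.
have {}mass_gt0 : 0 < mass by rewrite lt_def mass_gt0 sumr_ge0.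
rewrite -[in RHS]phi_p0.
apply: (@const_eq_of_eq_sums _ _ [pred p | (m1 (phi a b c d p) == m1 e) && (wt p.2 == y)]
  P (fun p => Q (phi a b c d p))) => //.
- by rewrite /= phi_p0 !eqxx.
- by move=> *; apply: unif_wt_ge0.
- move=> p /andP[/eqP m1_p /eqP wt_p].
  by apply: (P_eq_of_m1 P_ge0 margV_wt cond_m1); rewrite ?wt_p ?m1_p ?phi_p0.
- move=> P_p0_gt0 p /andP[/eqP m1_p /eqP wt_p]; apply: unif_wt_eq; apply: wt_supp => //.
  by rewrite (P_eq_of_m1 P_ge0 margV_wt cond_m1 (q := p0)) ?wt_p ?m1_p ?phi_p0.
apply: etrans (prob_eq_and_of_cprob (eq_wtV y) (lt0r_neq0 mass_gt0)
  (eq_m1 y (m1 e) mass_gt0)) _.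
rewrite (prob_phi det1); apply: eq_bigl => p.
by rewrite -[p in RHS](phiK det1) /= (phi_invK det1).
Qed.
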